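(* Let $n\ge 2$ be an integer and let $\boldsymbol{Z}$ be a finite E-subspace of the $n$-abomination $\mathbb{X}_n$ with an E-partition $R$ such that $\boldsymbol{Z}/R$ is $n$-colorable. Then for every $m\in\mathbb{N}$, if $c_{m,0},\dots,c_{m,2^{n+1}-1}\in Z$, there are $i<j$ such that $\langle c_{m,i},c_{m,j}\rangle\in R$.
   Context: $\mathbb{N}=\{0,1,2,\dots\}$. Fix an integer $n\ge 2$ and put $N=2^{n+1}-1$. Let $T_n$ be the set of triples $\langle k_1,k_2,k_3\rangle$ of pairwise distinct natural numbers $\le N$, with a fixed enumeration $T_n=\{s_0,\dots,s_t\}$. Let $U_n$ be a set of pairwise distinct elements $a_m,b_m$ ($m\in\mathbb{N}$) and $c_{m,k},d_{m,k},e^a_{m,k},e^b_{m,k}$ ($m\in\mathbb{N}$, $0\le k\le N$). Define $x\prec y$ on $U_n$ iff one of: (1) $x=a_m$ and $y\in\{c_{m,k_1},c_{m,k_2}\}$, where $s_j=\langle k_1,k_2,k_3\rangle$ with $j\equiv m \bmod (t+1)$; (2) $x=b_m$ and $y\in\{c_{m,k_1},c_{m,k_3}\}$, with $s_j$ as in (1); (3) $m\ge1$, $x=c_{m,k}$, and either $y=e^a_{m-1,j}$ with $j\ne k$, or $y=e^b_{m-1,i}$ for any $i\le N$; (4) $x=d_{m,k}$ and $y=c_{m,j}$ with $j\neq k$; (5) $x=e^a_{m,k}$ and either $y=a_m$ or $y=d_{m,j}$ with $j\ne k$; (6) $x=e^b_{m,k}$ and either $y=b_m$ or $y=d_{m,j}$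 with $j\ne k$. Let $\le$ be the reflexive transitive closure of $\prec$. The $n$-abomination $\mathbb{X}_n$ is the poset $U_n\cup\{\bot\}$ where $\bot$ is a new least element, with the topology in which $U$ is open iff $\bot\notin U$ or $U$ is cofinite; it is an Esakia space. An E-subspace is a closed upset with induced topology and order. An E-partition on an Esakia space $\mathbb{X}$ is an equivalence relation $R$ such that (a) if $\langle x,y\rangle\in R$ and $x\le z$ then there is $w\ge y$ with $\langle z,w\rangle\in R$; (b) if $\langle x,y\rangle\notin R$ there is a clopen union of $R$-classes containing $x$ but not $y$. The quotient $\mathbb{X}/R$ carries the quotient topology and the order $x/R\sqsubseteq y/R$ iff $x'\le y'$ for some $x'\in x/R$, $y'\in y/R$. With $\{0,1\}^n$ ordered componentwise, a weak $n$-coloring of an Esakia space is an order-preserving map into $\{0,1\}^n$ whose fibres are clopen; it is an $n$-coloring if every E-partition other than the identity relates two elements of distinct color; a space is $n$-colorable if it admits an $n$-coloring. *)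

From Stdlib Require Import Relation_Operators List.
From mathcomp Require Import all_boot.

Set Implicit Arguments.
Unset Strict Implicit.
Unset Printing Implicit Defensive.

Record ESpace := MkESpace {
  pt :> Type;
  ele : pt -> pt -> Prop;
  eopen : (pt -> Prop) -> Prop
}.

Definition clopen (X : ESpace) (U : X -> Prop) : Prop :=
  eopen U /\ eopen (fun x => ~ U x).

Definition E_partition (X : ESpace) (R : X -> X -> Prop) : Prop :=
  [/\ (forall x, R x x),
      (forall x y, R x y -> R y x),
      (forall x y z, R x y -> R y z -> R x z),
      (forall x y z, R x y -> ele x z -> exists2 w, ele y w & R z w)
    & (forall x y, ~ R x y ->
         exists U : X -> Prop,
           [/\ clopen U, (forall u v, R u v -> U u -> U v), U x & ~ U y])].

Definition upset (X : ESpace) (Z : X -> Prop) : Prop :=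
  forall x y, Z x -> ele x y -> Z y.

Definition closed (X : ESpace) (Z : X -> Prop) : Prop :=
  eopen (fun x => ~ Z x).

Definition E_subspace (X : ESpace) (Z : X -> Prop) : Prop :=
  closed Z /\ upset Z.

Definition subspace (X : ESpace) (Z : X -> Prop) : ESpace :=
  @MkESpace {x : X | Z x}
    (fun u v => ele (proj1_sig u) (proj1_sig v))
    (fun W => exists V : X -> Prop, eopen V /\ forall u, W u <-> V (proj1_sig u)).

Definition qpt (X : ESpace) (R : X -> X -> Prop) : Type :=
  {P : X -> Prop | exists x, P = R x}.

Definition qproj (X : ESpace) (R : X -> X -> Prop) (x : X) : qpt R :=
  exist _ (R x) (ex_intro _ x erefl).

Definition quotient (X : ESpace) (R : X -> X -> Prop) : ESpace :=
  @MkESpace (qpt R)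
    (fun P Q => exists x' y', proj1_sig P x' /\ proj1_sig Q y' /\ ele x' y')
    (fun W => eopen (fun x => W (qproj R x))).

Definition weak_coloring (n : nat) (X : ESpace) (f : X -> n.-tuple bool) : Prop :=
  (forall x y, ele x y -> forall i : 'I_n, tnth (f x) i ==> tnth (f y) i) /\
  (forall v : n.-tuple bool, clopen (fun x => f x = v)).

Definition coloring (n : nat) (X : ESpace) (f : X -> n.-tuple bool) : Prop :=
  weak_coloring f /\
  forall S : X -> X -> Prop, E_partition S ->
    (exists x y, S x y /\ x <> y) ->
    exists x y, S x y /\ f x <> f y.

Definition colorable (n : nat) (X : ESpace) : Prop :=
  exists f : X -> n.-tuple bool, coloring f.

(* N = 2^(n+1) - 1; indices k with 0 <= k <= N are ordinals of 'I_(2^(n+1)). *)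
Definition Nab (n : nat) : nat := 2 ^ n.+1 - 1.

Inductive abpt (n : nat) : Type :=
| Bot
| Pa : nat -> abpt n
| Pb : nat -> abpt n
| Pc : nat -> 'I_(2 ^ n.+1) -> abpt n
| Pd : nat -> 'I_(2 ^ n.+1) -> abpt n
| Pea : nat -> 'I_(2 ^ n.+1) -> abpt n
| Peb : nat -> 'I_(2 ^ n.+1) -> abpt n.

Arguments Bot {n}.

(* A valid enumeration s_0, ..., s_t of T_n (as a duplicate-free list). *)
Definition triple_ok (n : nat) (t : nat * nat * nat) : bool :=
  let: (k1, k2, k3) := t in
  [&& k1 <= Nab n, k2 <= Nab n, k3 <= Nab n,
      k1 != k2, k1 != k3 & k2 != k3].

Definition enumeration_of_T (n : nat) (s : seq (nat * nat * nat)) : Prop :=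
  uniq s /\ forall t, (t \in s) = triple_ok n t.

(* s_j with j = m mod (t+1) *)
Definition sj (s : seq (nat * nat * nat)) (m : nat) : nat * nat * nat :=
  nth (0, 0, 0) s (m %% size s).

Definition prec (n : nat) (s : seq (nat * nat * nat)) (x y : abpt n) : Prop :=
  match x, y with
  | Pa m, Pc m' k => m' = m /\
      let: (k1, k2, k3) := sj s m in (val k = k1 \/ val k = k2)
  | Pb m, Pc m' k => m' = m /\
      let: (k1, k2, k3) := sj s m in (val k = k1 \/ val k = k3)
  | Pc m k, Pea m' j => m = m'.+1 /\ j <> k
  | Pc m k, Peb m' i => m = m'.+1
  | Pd m k, Pc m' j => m' = m /\ j <> k
  | Pea m k, Pa m' => m' = m
  | Pea m k, Pd m' j => m' = m /\ j <> k
  | Peb m k, Pb m' => m' = m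
  | Peb m k, Pd m' j => m' = m /\ j <> k
  | _, _ => False
  end.

Definition ab_le (n : nat) (s : seq (nat * nat * nat)) (x y : abpt n) : Prop :=
  x = Bot \/ clos_refl_trans (abpt n) (prec s) x y.

Definition ab_open (n : nat) (U : abpt n -> Prop) : Prop :=
  ~ U Bot \/ exists l : list (abpt n), forall x, ~ U x -> List.In x l.

Definition abomination (n : nat) (s : seq (nat * nat * nat)) : ESpace :=
  @MkESpace (abpt n) (ab_le s) (@ab_open n).

Definition finite_set (T : Type) (Z : T -> Prop) : Prop :=
  exists l : list T, forall x, Z x -> List.In x l.

From Stdlib Require Import Relation_Operators Operators_Properties Classical.
From Stdlib Require Import ProofIrrelevance FunctionalExtensionality PropExtensionality.
From mathcomp Require Import all_boot zify.

Set Implicit Arguments.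
Unset Strict Implicit.
Unset Printing Implicit Defensive.

(* Since Z is a finite upset it misses the bottom point, so Z and Z/R are discrete; an
   n-coloring can then never give the same color to two distinct classes with the same
   strict upset, because merging them would be a nontrivial E-partition.
   Above the c_{m,k} lies the ladder c_0, d_0, e^a_0, c_1, ..., c_m: each level consists of
   2^(n+1) points, each lying below every point of the previous level except its namesake.
   If the points i and j of a level each share their class with some other point of that
   level, then i and j of the next level have the same strict upset, so equal colors merge
   them. The potential 2^|T| + |T| + |S| of a level's coloring (T the bits common to all its
   colors, S the bits missing from exactly one color) drops, from one level to the next, by
   at least the number of colors used minus one; by pigeonhole the set of indices that are
   paired at every level stays larger than the potential, so it is nonempty at the c_m. *)

Lemma exists_neq2 (I : finType) (a b : I) : 2 < #|I| -> exists c, c != a /\ c != b.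
Proof.
move=> hI; have : 0 < #|~: [set a; b]|.
  by have := cardsC [set a; b]; have := leq_b1 (a != b); rewrite cards2; lia.
by case/card_gt0P => c; rewrite !inE negb_or => /andP[]; exists c.
Qed.

Definition paired (I T : finType) (G : {set I}) (g : I -> T) : {set I} :=
  [set i in G | [exists j in G, (j != i) && (g j == g i)]].

Lemma mem_paired (I T : finType) (G : {set I}) (g : I -> T) i j :
  i \in G -> j \in G -> j != i -> g j = g i -> i \in paired G g.
Proof.
by move=> iG jG ji e; rewrite inE iG; apply/existsP; exists j; rewrite jG ji e eqxx.
Qed.

Lemma card_paired (I T : finType) (G : {set I}) (g : I -> T) :
  #|g @: G| < #|G| -> #|G| < #|paired G g| + #|g @: G|.
Proof.
move=> img_lt; set P := paired G g; set H := G :\: P.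
have sPG : P \subset G by apply/subsetP => i; rewrite inE => /andP[].
have injH : {in H &, injective g}.
  move=> i j /setDP[iG iP] /setDP[jG _] e; apply/eqP; apply: contraNT iP => ij.
  by apply: mem_paired iG jG _ (esym e); rewrite eq_sym.
have [i iP] : exists i, i \in P.
  apply/set0Pn; apply: contraTneq img_lt => P0.
  by rewrite /H P0 setD0 in injH; rewrite card_in_imset // ltnn.
have gi_new : g i \notin g @: H.
  apply/imsetP => -[j /setDP[jG jP] e]; case/negP: (jP).
  by apply: mem_paired jG (subsetP sPG i iP) _ e; apply: contraNneq jP => <-.
have : g i |: g @: H \subset g @: G.
  by rewrite subUset sub1set imset_f ?(subsetP sPG) ?imsetS ?subsetDl.
move/subset_leq_card; rewrite cardsU1 gi_new card_in_imset //.
by rewrite -(cardsID P G) (setIidPr sPG) -/H /=; lia.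
Qed.

Section Potential.
Variables (n : nat) (I : finType).
Implicit Types g h : I -> {set 'I_n}.

Definition common g : {set 'I_n} := \bigcap_k g k.
Definition missing g (i : 'I_n) : {set I} := [set k | i \notin g k].
Definition missed_once g : {set 'I_n} := [set i | #|missing g i| == 1].
Definition potential g : nat := 2 ^ #|common g| + #|common g| + #|missed_once g|.

Lemma potential_gt0 g : 0 < potential g.
Proof. by rewrite /potential !addn_gt0 expn_gt0. Qed.

Lemma potential_setT : potential (fun _ : I => [set: 'I_n]) = 2 ^ n + n.
Proof.
rewrite /potential.
have -> : common (fun _ : I => [set: 'I_n]) = setT.
  by apply/setP => i; rewrite in_setT; apply/bigcapP.
have -> : missed_once (fun _ : I => [set: 'I_n]) = set0.
  apply/setP => i; rewrite !inE.
  suff -> : missing (fun _ : I => [set: 'I_n]) i = set0 by rewrite cards0.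
  by apply/setP => k; rewrite !inE.
by rewrite cardsT card_ord cards0 addn0.
Qed.

Section Descent.
Variables g h : I -> {set 'I_n}.
Hypotheses (hI : 2 < #|I|) (h_below : forall k j, k != j -> h k \subset g j).

Lemma common_below : common h \subset common g.
Proof.
apply/subsetP => i /bigcapP ih; apply/bigcapP => j _.
have [k [kj _]] := exists_neq2 j j hI.
exact: subsetP (h_below kj) i (ih k isT).
Qed.

Lemma missed_once_below : missed_once h \subset common g :\: common h.
Proof.
apply/subsetP => i; rewrite inE => /cards1P[k missing_k].
have : k \in missing h i by rewrite missing_k set11.
rewrite !inE => ihk; apply/andP; split.
  by apply: contra ihk => /bigcapP; apply.
apply/bigcapP => j _; apply/negPn/negP => igj.
have [k' [k'j k'k]] := exists_neq2 j k hI.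
have : k' \in missing h i by rewrite inE; apply: contra igj; apply/subsetP/h_below.
by rewrite missing_k inE (negbTE k'k).
Qed.

Definition escaping : {set I} := [set k | ~~ (h k \subset common g)].

Lemma missing_escaping k :
  k \in escaping -> exists2 i, i \in missed_once g & missing g i = [set k].
Proof.
rewrite inE => /subsetPn[i ihk igN].
have missing_k : missing g i = [set k].
  apply/setP => j; rewrite !inE; case: (eqVneq j k) => [->|jk].
    apply: contra igN => igk; apply/bigcapP => l _.
    case: (eqVneq l k) => [-> //|lk]; rewrite eq_sym in lk; exact: subsetP (h_below lk) i ihk.
  by rewrite (subsetP (h_below _) i ihk) // eq_sym.
by exists i; rewrite // inE missing_k cards1.
Qed.

Lemma card_escaping : #|escaping| <= #|missed_once g|.
Proof.
pose pick_missing i := [pick k in missing g i].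
rewrite -(card_imset _ (@Some_inj _)).
apply: leq_trans (leq_imset_card pick_missing _); apply/subset_leq_card/subsetP.
move=> _ /imsetP[k /missing_escaping[i iS missing_k] ->]; apply/imsetP; exists i => //.
rewrite /pick_missing missing_k.
by case: pickP => [k' /set1P -> // | /(_ k)]; rewrite set11.
Qed.

Lemma card_image_settled : #|h @: ~: escaping| <= 2 ^ (#|common g| - #|common h|).
Proof.
set D := common g :\: common h.
have settled_split k : k \in ~: escaping -> h k = common h :|: (h k :&: D).
  rewrite !inE negbK => hk; apply/setP => x; rewrite in_setU in_setI in_setD.
  case: (boolP (x \in common h)) => [/bigcapP/(_ k isT) -> // | _] /=.
  by case: (boolP (x \in h k)) => // /(subsetP hk) ->.
have inj : {in h @: ~: escaping &, injective (fun S => S :&: D)}.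
  move=> _ _ /imsetP[k1 k1s ->] /imsetP[k2 k2s ->] e.
  by rewrite [LHS]settled_split // [RHS]settled_split // e.
rewrite -(card_in_imset inj) -(cardsDS common_below) -card_powerset.
by apply/subset_leq_card/subsetP => _ /imsetP[S _ ->]; rewrite powersetE subsetIr.
Qed.

Lemma card_image_potential : #|h @: setT| + potential h <= potential g + 1.
Proof.
have img : #|h @: setT| <= #|h @: ~: escaping| + #|escaping|.
  have := leq_imset_card h escaping.
  by rewrite -(setUCr escaping) setUC imsetU cardsU; lia.
have := card_escaping; have := card_image_settled.
have := subset_leq_card missed_once_below; rewrite cardsDS ?common_below //.
have := subset_leq_card common_below; rewrite /potential.
set a := #|common g|; set b := #|common h| => le_ba.
have e2 : 2 ^ a = 2 ^ (a - b) * 2 ^ b by rewrite -expnD subnK.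
have := expn_gt0 2 (a - b); have := expn_gt0 2 b.
(* 2^(a-b) + 2^b <= 2^a + 1 because (2^(a-b) - 1) (2^b - 1) >= 0 *)
nia.
Qed.

Lemma potential_lt_card_paired (G : {set I}) :
  potential g < #|G| -> potential h < #|paired G h|.
Proof.
move=> ltG; have img : #|h @: G| <= #|h @: setT| by apply/subset_leq_card/imsetS/subsetT.
have := card_image_potential; have := potential_gt0 h => h0 himg.
have lt : #|h @: G| < #|G| by lia.
by have := card_paired lt; lia.
Qed.

End Descent.
End Potential.

Section Chain.
Variables (n : nat) (I : finType) (col : nat -> I -> {set 'I_n}).

Fixpoint paired_chain t : {set I} :=
  if t is t'.+1 then paired (paired_chain t') (col t) else paired setT (col 0).

Lemma chain_collision (T : nat) (M : nat -> I -> I -> Prop) :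
  2 < #|I| -> 2 ^ n + n < #|I| ->
  (forall t k j, t < T -> k != j -> col t.+1 k \subset col t j) ->
  (forall i j, i != j -> col 0 i = col 0 j -> M 0 i j) ->
  (forall t i j i' j', t < T -> i != j -> i' != i -> j' != j ->
     M t i i' -> M t j j' -> col t.+1 i = col t.+1 j -> M t.+1 i j) ->
  exists i j, i != j /\ M T i j.
Proof.
move=> hI hIn col_below M0 MS.
have potential_lt t : t <= T -> potential (col t) < #|paired_chain t|.
  elim: t => [_ | t IH ltT] /=.
    by apply: (potential_lt_card_paired (g := fun=> setT)); rewrite ?potential_setT ?cardsT.
  by apply: potential_lt_card_paired (IH (ltnW ltT)) => // k j; apply: col_below.
have partner t : t <= T -> forall i, i \in paired_chain t -> exists2 j, j != i & M t i j.
  elim: t => [_ | t IH ltT] i /=.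
    rewrite inE => /andP[_ /exists_inP[j _ /andP[ji /eqP e]]].
    by exists j => //; apply: M0; rewrite // eq_sym.
  rewrite inE => /andP[iG /exists_inP[j jG /andP[ji /eqP e]]]; exists j => //.
  have [i' i'i Mi] := IH (ltnW ltT) i iG; have [j' j'j Mj] := IH (ltnW ltT) j jG.
  by apply: (MS t i j i' j') => //; rewrite eq_sym.
have [i iG] : exists i, i \in paired_chain T.
  by apply/card_gt0P; apply: leq_ltn_trans (potential_lt T (leqnn T)).
by have [j ji Mij] := partner T (leqnn T) i iG; exists i, j; rewrite eq_sym.
Qed.

End Chain.

Lemma clos_rt_first_step T (r : T -> T -> Prop) x y :
  clos_refl_trans T r x y -> y <> x -> exists2 z, r x z & clos_refl_trans T r z y.
Proof.
move=> /clos_rt_rt1n_iff; case=> [// | z w xz zw] _.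
by exists z => //; apply/clos_rt_rt1n_iff.
Qed.

Lemma clos_rt_cons T (r : T -> T -> Prop) x y z :
  r x y -> clos_refl_trans T r y z -> clos_refl_trans T r x z.
Proof. by move=> xy; apply: rt_trans; apply: rt_step. Qed.

Definition ladder n (t : nat) (k : 'I_(2 ^ n.+1)) : abpt n :=
  if t %% 3 == 0 then Pc (t %/ 3) k
  else if t %% 3 == 1 then Pd (t %/ 3) k else Pea (t %/ 3) k.
Arguments ladder : clear implicits.

Lemma ladder_neq_Bot n t k : ladder n t k <> Bot.
Proof. by rewrite /ladder; case: ifP => _; last case: ifP. Qed.

Lemma ladder_3 n m k : ladder n (3 * m) k = Pc m k.
Proof. by rewrite /ladder mulKn // modnMr. Qed.

Lemma ladder_cases n t :
  [\/ exists p, ladder n t = @Pc n p /\ ladder n t.+1 = @Pd n p,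
      exists p, ladder n t = @Pd n p /\ ladder n t.+1 = @Pea n p
    | exists p, ladder n t = @Pea n p /\ ladder n t.+1 = @Pc n p.+1].
Proof.
rewrite /ladder; have : t %% 3 < 3 by rewrite ltn_mod.
case e: (t %% 3) => [|[|[|r]]] // _; [apply: Or31 | apply: Or32 | apply: Or33];
  exists (t %/ 3).
- by rewrite (_ : t.+1 %% 3 = 1) 1?(_ : t.+1 %/ 3 = t %/ 3) //; lia.
- by rewrite (_ : t.+1 %% 3 = 2) 1?(_ : t.+1 %/ 3 = t %/ 3) //; lia.
- by rewrite (_ : t.+1 %% 3 = 0) 1?(_ : t.+1 %/ 3 = (t %/ 3).+1) //; lia.
Qed.

Lemma two_lt_exp2S n : 0 < n -> 2 < 2 ^ n.+1.
Proof. by move=> hn; rewrite expnS; have := ltn_expl n (isT : 1 < 2); lia. Qed.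

Section LadderOrder.
Variables (n : nat) (s : seq (nat * nat * nat)).
Hypothesis hn : 0 < n.

Lemma prec_ladder t (j k : 'I_(2 ^ n.+1)) :
  j != k -> prec s (ladder n t.+1 j) (ladder n t k).
Proof.
by move=> /eqP jk; case: (ladder_cases n t) => -[p [-> ->]] /=; split => // /esym.
Qed.

Lemma ladder0_top k y : ab_le s (ladder n 0 k) y -> y = ladder n 0 k.
Proof.
have -> : ladder n 0 k = Pc 0 k := ladder_3 0 k.
case=> [// | /clos_rt_rt1n_iff]; case=> [// | z w hz _]; by case: z hz => // ? ? [].
Qed.

Lemma prec_ladder_succ t (j k : 'I_(2 ^ n.+1)) z :
  j != k -> prec s (ladder n t.+1 j) z -> z = ladder n t k \/ prec s (ladder n t.+1 k) z.
Proof.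
move=> /eqP jk; case: (ladder_cases n t) => -[p [-> ->]];
  case: z => [|m'|m'|m' l|m' l|m' l|m' l] /= hz //;
  try (case: (eqVneq l k) => [-> | /eqP lk]); firstorder congruence.
Qed.

Lemma prec_ladder_other t (k : 'I_(2 ^ n.+1)) z :
  prec s (ladder n t k) z -> exists2 c, c != k & prec s (ladder n t c) z.
Proof.
have hN : 2 < #|'I_(2 ^ n.+1)| by rewrite card_ord two_lt_exp2S.
case: (ladder_cases n t) => -[p [-> _]];
  case: z => [|m'|m'|m' l|m' l|m' l|m' l] /= hz //;
  first [have [c [ck /eqP cl]] := exists_neq2 k l hN | have [c [ck _]] := exists_neq2 k k hN];
  exists c => //; firstorder congruence.
Qed.

Lemma ladder_up_swap t (j k : 'I_(2 ^ n.+1)) y :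
  j != k -> ab_le s (ladder n t.+1 j) y ->
  y <> ladder n t.+1 j -> y <> ladder n t k -> ab_le s (ladder n t.+1 k) y.
Proof.
move=> jk [/ladder_neq_Bot[] | jy] y_j y_k; right.
have [z jz zy] := clos_rt_first_step jy y_j.
have [ez | kz] := prec_ladder_succ jk jz; last exact: clos_rt_cons kz zy.
subst z; have [z kz zy'] := clos_rt_first_step zy y_k.
have [c ck cz] := prec_ladder_other kz.
by apply: clos_rt_cons (prec_ladder _ _) (clos_rt_cons cz zy'); rewrite eq_sym.
Qed.

End LadderOrder.

Lemma subspace_eq (X : ESpace) (Z : X -> Prop) (u v : subspace Z) :
  proj1_sig u = proj1_sig v -> u = v.
Proof. by case: u v => x hx [y hy] /= e; apply: ProofIrrelevanceTheory.subset_eq_compat. Qed.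

Section Quotient.
Variables (X : ESpace) (R : X -> X -> Prop).
Hypothesis hR : E_partition R.

Lemma qpt_qproj (P : quotient R) : exists x, P = qproj R x.
Proof.
case: P => P [x eP]; exists x.
exact: ProofIrrelevanceTheory.subset_eq_compat.
Qed.

Lemma eq_qproj u v : qproj R u = qproj R v <-> R u v.
Proof.
case: hR => rf sy tr _ _; split.
  by move/(f_equal (@proj1_sig _ _)) => /= ->; apply: rf.
move=> uv; apply: ProofIrrelevanceTheory.subset_eq_compat.
apply: functional_extensionality => w; apply: propositional_extensionality.
by split; [apply: tr (sy _ _ uv) | apply: tr uv].
Qed.

Lemma ele_qproj u v : ele u v -> @ele (quotient R) (qproj R u) (qproj R v).
Proof. by case: hR => rf _ _ _ _ uv; exists u, v; split; [|split]. Qed.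

Lemma qproj_ele_up u (P : quotient R) :
  @ele (quotient R) (qproj R u) P -> exists2 v, ele u v & P = qproj R v.
Proof.
case: (hR) => _ sy _ up _; case: (qpt_qproj P) => p ->{P} [x [y [/= ux [py xy]]]].
have [w uw yw] := up _ _ _ (sy _ _ ux) xy.
by exists w => //; apply/eq_qproj; case: hR => _ _ tr _ _; apply: tr py yw.
Qed.

Lemma quotient_ele_refl : (forall x : X, ele x x) -> forall P : quotient R, ele P P.
Proof. by move=> refl P; case: (qpt_qproj P) => x ->; apply/ele_qproj/refl. Qed.

Lemma quotient_clopen :
  (forall W : X -> Prop, eopen W) -> forall U : quotient R -> Prop, clopen U.
Proof. by move=> all_open U; split; apply: all_open. Qed.

End Quotient.

Section Merge.
Variables (Y : ESpace) (P1 P2 : Y).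
Hypotheses (Y_clopen : forall U : Y -> Prop, clopen U) (Y_refl : forall P : Y, ele P P).
Hypotheses (up12 : forall Q, Q <> P1 -> Q <> P2 -> ele P1 Q -> ele P2 Q)
           (up21 : forall Q, Q <> P1 -> Q <> P2 -> ele P2 Q -> ele P1 Q).

Definition merge_rel (x y : Y) : Prop :=
  x = y \/ (x = P1 /\ y = P2) \/ (x = P2 /\ y = P1).

Lemma merge_rel_trans x y z : merge_rel x y -> merge_rel y z -> merge_rel x z.
Proof. by rewrite /merge_rel => [[->|[[-> ->]|[-> ->]]] [->|[[e ->]|[e ->]]]]; subst; tauto. Qed.

Lemma merge_rel_E_partition : E_partition merge_rel.
Proof.
split.
- by move=> x; left.
- by rewrite /merge_rel => x y [->|[[-> ->]|[-> ->]]]; tauto.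
- exact: merge_rel_trans.
- move=> x y z [<-|[[-> ->]|[-> ->]]] xz; first by exists z => //; left.
  + case: (classic (z = P1)) => [->|z1]; first by exists P2 => //; right; left.
    case: (classic (z = P2)) => [->|z2]; first by exists P2 => //; left.
    by exists z; [apply: up12 | left].
  + case: (classic (z = P2)) => [->|z2]; first by exists P1 => //; right; right.
    case: (classic (z = P1)) => [->|z1]; first by exists P1 => //; left.
    by exists z; [apply: up21 | left].
- move=> x y nxy; exists (merge_rel x); split => //; last by left.
  by move=> u v uv xu; apply: merge_rel_trans xu uv.
Qed.

Lemma coloring_merge k (f : Y -> k.-tuple bool) : coloring f -> f P1 = f P2 -> P1 = P2.
Proof.
move=> [_ separates] f12; apply: NNPP => P12.
have merged : exists x y, merge_rel x y /\ x <> y by exists P1, P2; split => //; right; left.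
have [x [y [xy fxy]]] := separates _ merge_rel_E_partition merged.
by case: xy fxy => [->|[[-> ->]|[-> ->]]]; apply.
Qed.

End Merge.

Lemma Pa_notin_list n (l : list (abpt n)) : exists N, ~ List.In (@Pa n N) l.
Proof.
suff [N HN] : exists N, forall k, N <= k -> ~ List.In (@Pa n k) l by exists N; apply: HN.
elim: l => [|x l [N HN]]; first by exists 0 => ? _ [].
exists (maxn N (if x is Pa j then j.+1 else 0)) => k.
rewrite geq_max => /andP[Nk xk] [ex|kl].
  by subst x; rewrite ltnn in xk.
exact: HN kl.
Qed.

Lemma finite_upset_notin_Bot n s (Z : abomination n s -> Prop) :
  upset Z -> finite_set Z -> ~ Z Bot.
Proof.
move=> Z_up [l Zl] ZBot; have [N Nl] := Pa_notin_list l.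
by apply/Nl/Zl/(Z_up Bot) => //; left.
Qed.

Lemma subspace_open n s (Z : abomination n s -> Prop) :
  ~ Z Bot -> forall W : subspace Z -> Prop, eopen W.
Proof.
move=> ZBot W; exists (fun y => exists h : Z y, W (exist _ y h)); split.
  by left; case=> h _; apply: ZBot h.
move=> [y h] /=; split; first by exists h.
by move=> [h' Wh]; rewrite (proof_irrelevance _ h h').
Qed.

Lemma tnth_set_inj n (u v : n.-tuple bool) :
  [set i | tnth u i] = [set i | tnth v i] -> u = v.
Proof. by move/setP => e; apply: eq_from_tnth => i; have := e i; rewrite !inE. Qed.

Section Rungs.
Variables (n : nat) (s : seq (nat * nat * nat)) (Z : abomination n s -> Prop).
Variables (R : subspace Z -> subspace Z -> Prop) (f : quotient R -> n.-tuple bool).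
Variables (m : nat) (hc : forall k : 'I_(2 ^ n.+1), Z (Pc m k)).
Hypotheses (hn : 0 < n) (Z_upset : upset Z) (Z_fin : finite_set Z).
Hypotheses (hR : E_partition R) (hf : coloring f).

Lemma card_index_gt2 : 2 < #|'I_(2 ^ n.+1)|.
Proof. by rewrite card_ord two_lt_exp2S. Qed.

Lemma ladder_in_Z t k : t <= 3 * m -> Z (ladder n t k).
Proof.
move=> le_t; rewrite -(subKn le_t).
elim: (3 * m - t) (leq_subr t (3 * m)) k => [|d IH] le_d k; first by rewrite subn0 ladder_3.
have [j [jk _]] := exists_neq2 k k card_index_gt2.
have := IH (ltnW le_d) j; rewrite (_ : 3 * m - d = (3 * m - d.+1).+1); last lia.
by move/Z_upset; apply; right; apply/rt_step/prec_ladder.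
Qed.

(* Levels t > 3m are clamped to 3m, so that every rung is a point of Z. *)
Definition rung t k : subspace Z :=
  exist _ (ladder n (minn t (3 * m)) k) (ladder_in_Z k (geq_minr t (3 * m))).

Lemma val_rung t k : t <= 3 * m -> proj1_sig (rung t k) = ladder n t k.
Proof. by move/minn_idPl => /= ->. Qed.

Lemma rung_of_val t k (v : subspace Z) :
  t <= 3 * m -> proj1_sig v = ladder n t k -> v = rung t k.
Proof. by move=> le_t e; apply: subspace_eq; rewrite val_rung. Qed.

Lemma rung_bottom k : rung (3 * m) k = exist _ (Pc m k) (hc k).
Proof. by apply: subspace_eq; rewrite val_rung // ladder_3. Qed.

Definition cls t k : quotient R := qproj R (rung t k).
Definition col t k : {set 'I_n} := [set i | tnth (f (cls t k)) i].

Lemma cls_below t j k : t < 3 * m -> j != k -> ele (cls t.+1 j) (cls t k).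
Proof.
move=> lt_t jk; apply: ele_qproj => //=; rewrite (minn_idPl lt_t) (minn_idPl (ltnW lt_t)).
by right; apply/rt_step/prec_ladder.
Qed.

Lemma col_below t k j : t < 3 * m -> k != j -> col t.+1 k \subset col t j.
Proof.
move=> lt_t kj; apply/subsetP => i; rewrite !inE.
by move/implyP: (hf.1.1 _ _ (cls_below lt_t kj) i).
Qed.

Lemma cls_up t k Y : t <= 3 * m -> ele (cls t k) Y ->
  exists2 v : subspace Z, ab_le s (ladder n t k) (proj1_sig v) & Y = qproj R v.
Proof. by move=> le_t /(qproj_ele_up hR)[v]; rewrite /= (minn_idPl le_t); exists v. Qed.

Lemma quotient_merge (P1 P2 : quotient R) : f P1 = f P2 ->
  (forall Q, Q <> P1 -> Q <> P2 -> ele P1 Q -> ele P2 Q) ->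
  (forall Q, Q <> P1 -> Q <> P2 -> ele P2 Q -> ele P1 Q) -> P1 = P2.
Proof.
move=> f12 up12 up21; apply: (coloring_merge _ _ up12 up21 hf f12).
  exact/quotient_clopen/subspace_open/finite_upset_notin_Bot.
by apply: quotient_ele_refl => // x; right; apply: rt_refl.
Qed.

Lemma cls0_top i Y : ele (cls 0 i) Y -> Y = cls 0 i.
Proof. by case/cls_up => // v /ladder0_top v0 ->; rewrite (rung_of_val _ v0). Qed.

Lemma cls0_merge i j : col 0 i = col 0 j -> cls 0 i = cls 0 j.
Proof. by move/tnth_set_inj/quotient_merge; apply=> Q Qi Qj /cls0_top. Qed.

Lemma cls_up_swap t i j j' Y : t < 3 * m -> i != j -> j' != j -> cls t j = cls t j' ->
  Y <> cls t.+1 i -> ele (cls t.+1 i) Y -> ele (cls t.+1 j) Y.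
Proof.
move=> lt_t ij j'j cls_jj' Yi /cls_up[// | v iv eY]; subst Y.
have [vi | not_vi] := classic (proj1_sig v = ladder n t.+1 i).
  by case: Yi; rewrite (rung_of_val lt_t vi).
have [vj | not_vj] := classic (proj1_sig v = ladder n t j).
  rewrite (rung_of_val (ltnW lt_t) vj) -/(cls t j) cls_jj'.
  by apply: cls_below; rewrite // eq_sym.
apply: ele_qproj => //=; rewrite (minn_idPl lt_t).
by apply: (ladder_up_swap hn ij iv).
Qed.

Lemma cls_merge_step t i j i' j' : t < 3 * m -> i != j -> i' != i -> j' != j ->
  cls t i = cls t i' -> cls t j = cls t j' -> col t.+1 i = col t.+1 j ->
  cls t.+1 i = cls t.+1 j.
Proof.
move=> lt_t ij i'i j'j cls_ii' cls_jj' /tnth_set_inj/quotient_merge; apply=> Q Qi Qj.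
  exact: cls_up_swap cls_jj' Qi.
by apply: cls_up_swap cls_ii' Qj; rewrite // eq_sym.
Qed.

Lemma bottom_collision : exists i j : 'I_(2 ^ n.+1),
  i != j /\ R (exist _ (Pc m i) (hc i)) (exist _ (Pc m j) (hc j)).
Proof.
have card_gt : 2 ^ n + n < #|'I_(2 ^ n.+1)|.
  by rewrite card_ord expnS; have := ltn_expl n (isT : 1 < 2); lia.
have [i [j [ij cls_ij]]] := chain_collision (M := fun t i j => cls t i = cls t j)
  card_index_gt2 card_gt col_below (fun i j _ => cls0_merge (i := i) (j := j)) cls_merge_step.
by exists i, j; split => //; rewrite -!rung_bottom; apply/eq_qproj.
Qed.

End Rungs.

Theorem mainTheorem9 (n : nat) (s : seq (nat * nat * nat))
  (hn : 2 <= n) (hs : enumeration_of_T n s)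
  (Z : abomination n s -> Prop)
  (hZsub : E_subspace Z) (hZfin : finite_set Z)
  (R : subspace Z -> subspace Z -> Prop)
  (hR : E_partition R)
  (hcol : colorable n (quotient R)) :
  forall (m : nat) (hc : forall k : 'I_(2 ^ n.+1), Z (Pc m k)),
    exists i j : 'I_(2 ^ n.+1),
      (i < j)%N /\ R (exist _ (Pc m i) (hc i)) (exist _ (Pc m j) (hc j)).
Proof.
(* Neither the enumeration [hs] nor the points a_m, b_m, e^b_m play any role. *)
move=> m hc; case: hcol => f hf.
have [i [j [ij Rij]]] := bottom_collision hc (ltnW hn) hZsub.2 hZfin hR hf.
case: (ltngtP i j) => [lt_ij | lt_ji | /val_inj eij]; first by exists i, j.
  by exists j, i; split => //; case: hR => _ sym _ _ _; apply: sym.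
by rewrite eij eqxx in ij.
Qed.
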